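(* Assume the stochastic matrix $A$ is irreducible and aperiodic, and let $\boldsymbol\mu$ be its (unique) stationary distribution. Then $$\tau_t(A)\longrightarrow\frac{1}{N\|\boldsymbol\mu\|^2}\qquad\text{as }t\to\infty.$$
   Context: Let $X$ be a square-integrable real random variable with $\mathbb E X=\theta$ and $\mathrm{Var}(X)=\sigma^2>0$. Fix an integer $N\geq 2$. For $i\in\{1,\dots,N\}$ and $t\geq 1$ let $X_t^{(i)}$ be random variables distributed as $X$, mutually independent over both $i$ and $t$, and write $\mathbf X_t=(X_t^{(1)},\dots,X_t^{(N)})^\top$. Let $A=(a_{ij})_{1\le i,j\le N}$ be a stochastic matrix ($a_{ij}\geq 0$ and every row sums to $1$). Define $\hat{\boldsymbol\theta}_1=\mathbf X_1$ and $\hat{\boldsymbol\theta}_{t+1}=\frac{t}{t+1}A\hat{\boldsymbol\theta}_t+\frac{1}{t+1}\mathbf X_{t+1}$ for $t\geq 1$. Let $\bar{\mathbb X}_{Nt}=\frac{1}{Nt}\sum_{i=1}^N\sum_{k=1}^t X_k^{(i)}$, $\mathbf 1=(1,\dots,1)^\top$, and let $\|\cdot\|$ denote the Euclidean norm. The performance ratio is $\tau_t(A)=\dfrac{\mathbb E\|(\bar{\mathbb X}_{Nt}-\theta)\mathbf 1\|^2}{\mathbb E\|\hat{\boldsymbol\theta}_t-\theta\mathbf 1\|^2}$, $t\geq 1$. $A$ is irreducible if for every $(i,j)$ there is $k\geq 0$ with $(A^k)_{ij}\neq 0$; aperiodic means the gcd of all $k\geq1$ with $(A^k)_{ii}>0$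 equals $1$. The stationary distribution is the probability row vector $\boldsymbol\mu$ with $\boldsymbol\mu A=\boldsymbol\mu$. *)

From Stdlib Require Import Reals Lra List.
Open Scope R_scope.

Fixpoint sumN (n : nat) (f : nat -> R) : R :=
  match n with O => 0 | S m => sumN m f + f m end.

Fixpoint mpow (N : nat) (A : nat -> nat -> R) (k : nat) : nat -> nat -> R :=
  match k with
  | O => fun i j => if Nat.eqb i j then 1 else 0
  | S k' => fun i j => sumN N (fun l => mpow N A k' i l * A l j)
  end.

Definition stochastic (N : nat) (A : nat -> nat -> R) : Prop :=
  (forall i j, (i < N)%nat -> (j < N)%nat -> 0 <= A i j) /\
  (forall i, (i < N)%nat -> sumN N (fun j => A i j) = 1).

Definition irreducible (N : nat) (A : nat -> nat -> R) : Prop :=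
  forall i j, (i < N)%nat -> (j < N)%nat -> exists k : nat, mpow N A k i j <> 0.

(* gcd of {k >= 1 | (A^k)_ii > 0} equals 1 (for every state i) *)
Definition aperiodic (N : nat) (A : nat -> nat -> R) : Prop :=
  forall i, (i < N)%nat ->
    forall d : nat,
      (forall k : nat, (1 <= k)%nat -> 0 < mpow N A k i i -> Nat.divide d k) ->
      d = 1%nat.

Definition stationary_distribution (N : nat) (A : nat -> nat -> R) (mu : nat -> R) : Prop :=
  (forall j, (j < N)%nat -> 0 <= mu j) /\
  sumN N mu = 1 /\
  (forall j, (j < N)%nat -> sumN N (fun i => mu i * A i j) = mu j).

Definition expectation_axioms {Omega : Type}
  (integrable : (Omega -> R) -> Prop) (E : (Omega -> R) -> R) : Prop :=
  (forall c : R, integrable (fun _ => c) /\ E (fun _ => c) = c) /\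
  (forall f g, integrable f -> integrable g ->
      integrable (fun w => f w + g w) /\ E (fun w => f w + g w) = E f + E g) /\
  (forall (c : R) f, integrable f ->
      integrable (fun w => c * f w) /\ E (fun w => c * f w) = c * E f) /\
  (forall f, integrable f -> (forall w, 0 <= f w) -> 0 <= E f).

Fixpoint prodL {A : Type} (l : list A) (g : A -> R) : R :=
  match l with nil => 1 | a :: l' => g a * prodL l' g end.

Definition valid_index (N : nat) (p : nat * nat) : Prop :=
  (1 <= fst p)%nat /\ (snd p < N)%nat.

(* X t i = X_t^{(i)};  mutual independence over (t,i): for every finite family of
   distinct indices and continuous (hence Borel) functions f_s with f_s(X_s)
   integrable, the product is integrable with expectation the product. *)
Definition mutually_independent {Omega : Type} (N : nat)
  (integrable : (Omega -> R) -> Prop) (E : (Omega -> R) -> R)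
  (X : nat -> nat -> Omega -> R) : Prop :=
  forall (l : list (nat * nat)) (f : nat * nat -> R -> R),
    NoDup l -> Forall (valid_index N) l ->
    (forall p, In p l -> continuity (f p)) ->
    (forall p, In p l -> integrable (fun w => f p (X (fst p) (snd p) w))) ->
    integrable (fun w => prodL l (fun p => f p (X (fst p) (snd p) w))) /\
    E (fun w => prodL l (fun p => f p (X (fst p) (snd p) w)))
      = prodL l (fun p => E (fun w => f p (X (fst p) (snd p) w))).

Definition identically_distributed {Omega : Type} (N : nat)
  (integrable : (Omega -> R) -> Prop) (E : (Omega -> R) -> R)
  (X0 : Omega -> R) (X : nat -> nat -> Omega -> R) : Prop :=
  forall t i (f : R -> R), (1 <= t)%nat -> (i < N)%nat -> continuity f ->
    (integrable (fun w => f (X t i w)) <-> integrable (fun w => f (X0 w))) /\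
    E (fun w => f (X t i w)) = E (fun w => f (X0 w)).

(* thetahat_aux n = \hat\theta_{n+1} *)
Fixpoint thetahat_aux {Omega : Type} (N : nat) (A : nat -> nat -> R)
  (X : nat -> nat -> Omega -> R) (n : nat) : nat -> Omega -> R :=
  match n with
  | O => fun i w => X 1%nat i w
  | S m => fun i w =>
      INR (S m) / INR (S (S m)) * sumN N (fun j => A i j * thetahat_aux N A X m j w)
      + / INR (S (S m)) * X (S (S m)) i w
  end.

(* \hat\theta_t, for t >= 1 *)
Definition thetahat {Omega : Type} (N : nat) (A : nat -> nat -> R)
  (X : nat -> nat -> Omega -> R) (t : nat) : nat -> Omega -> R :=
  thetahat_aux N A X (t - 1).

Definition Xbar {Omega : Type} (N : nat) (X : nat -> nat -> Omega -> R) (t : nat)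
  (w : Omega) : R :=
  / (INR N * INR t) * sumN N (fun i => sumN t (fun k => X (S k) i w)).

Definition tau {Omega : Type} (N : nat) (E : (Omega -> R) -> R) (X0 : Omega -> R)
  (A : nat -> nat -> R) (X : nat -> nat -> Omega -> R) (t : nat) : R :=
  E (fun w => sumN N (fun _ => (Xbar N X t w - E X0) ^ 2))
  / E (fun w => sumN N (fun i => (thetahat N A X t i w - E X0) ^ 2)).

(** The estimator is a matrix-weighted average of the centred observations,
    [thetahat_t - theta 1 = t^-1 sum_(k<t) A^(t-1-k) (X_(k+1) - theta 1)].
    Since the observations are uncorrelated with common variance [s2], the two
    mean squared errors are [s2/t] and [s2/t^2 * sum_(m<t) |A^m|_F^2], so
    [tau_t = t / sum_(m<t) |A^m|_F^2].  An irreducible aperiodic stochastic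
    matrix has a power with all entries positive, hence is a Doeblin
    contraction: its powers converge geometrically to the rank-one matrix
    [1 mu], whose squared Frobenius norm is [N |mu|^2].  Cesaro averaging then
    gives the limit [1 / (N |mu|^2)]. *)

From Stdlib Require Import Reals List Lra Lia Psatz Classical FunctionalExtensionality.
Open Scope R_scope.

Lemma sumN_ext n f g : (forall k, (k < n)%nat -> f k = g k) -> sumN n f = sumN n g.
Proof.
  induction n as [|n IH]; intros H; simpl; auto.
  rewrite IH by (intros; apply H; lia). rewrite H by lia. reflexivity.
Qed.

Lemma sumN_S n f : sumN (S n) f = sumN n f + f n.
Proof. reflexivity. Qed.

Lemma sumN_plus n f g : sumN n (fun k => f k + g k) = sumN n f + sumN n g.
Proof. induction n; simpl; [lra|]. rewrite IHn; lra. Qed.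

Lemma sumN_scal_l n c f : sumN n (fun k => c * f k) = c * sumN n f.
Proof. induction n; simpl; [lra|]. rewrite IHn; lra. Qed.

Lemma sumN_scal_r n c f : sumN n (fun k => f k * c) = sumN n f * c.
Proof. induction n; simpl; [lra|]. rewrite IHn; lra. Qed.

Lemma sumN_const n c : sumN n (fun _ => c) = INR n * c.
Proof. induction n; simpl sumN; [simpl; lra|]. rewrite IHn, S_INR; lra. Qed.

Lemma sumN_swap n m (f : nat -> nat -> R) :
  sumN n (fun i => sumN m (fun j => f i j)) = sumN m (fun j => sumN n (fun i => f i j)).
Proof.
  induction n; simpl.
  - rewrite sumN_const; ring.
  - rewrite IHn, <- sumN_plus; reflexivity.
Qed.

Lemma sumN_app a b f : sumN (a + b) f = sumN a f + sumN b (fun k => f (a + k)%nat).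
Proof.
  induction b; simpl.
  - rewrite Nat.add_0_r; lra.
  - rewrite Nat.add_succ_r; simpl; rewrite IHb; lra.
Qed.

Lemma sumN_shift n f : sumN (S n) f = f 0%nat + sumN n (fun k => f (S k)).
Proof. induction n; simpl in *; [lra|]. rewrite IHn; lra. Qed.

Lemma sumN_rev n f : sumN n (fun k => f (n - 1 - k)%nat) = sumN n f.
Proof.
  revert f; induction n; intros f; simpl; auto.
  rewrite (sumN_ext n _ (fun k => f (S (n - 1 - k)))) by (intros; f_equal; lia).
  rewrite (IHn (fun k => f (S k))).
  replace (n - 0 - n)%nat with 0%nat by lia.
  pose proof (sumN_shift n f); simpl in *; lra.
Qed.

Lemma sumN_flatten T N (g : nat -> nat -> R) : (0 < N)%nat ->
  sumN T (fun k => sumN N (fun j => g k j))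
  = sumN (T * N) (fun p => g (p / N) (p mod N))%nat.
Proof.
  intros HN. induction T; simpl; auto.
  rewrite IHT, Nat.add_comm, sumN_app. f_equal. apply sumN_ext. intros j Hj.
  rewrite Nat.div_add_l, Nat.div_small, (Nat.add_comm (T * N)), Nat.Div0.mod_add,
    Nat.mod_small by lia.
  f_equal; lia.
Qed.

Lemma sumN_kronecker_l n i f : (i < n)%nat ->
  sumN n (fun j => (if Nat.eqb i j then 1 else 0) * f j) = f i.
Proof.
  induction n; intros H; [lia|]. simpl.
  destruct (Nat.eq_dec i n) as [->|Hne].
  - rewrite Nat.eqb_refl, (sumN_ext _ _ (fun _ => 0 * 0)), sumN_const; [lra|].
    intros k Hk. destruct (Nat.eqb_spec n k); [lia|lra].
  - rewrite IHn by lia. destruct (Nat.eqb_spec i n); [lia|lra].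
Qed.

Lemma sumN_kronecker_r n i f : (i < n)%nat ->
  sumN n (fun j => f j * (if Nat.eqb j i then 1 else 0)) = f i.
Proof.
  intros H. rewrite <- (sumN_kronecker_l n i f H). apply sumN_ext. intros k _.
  destruct (Nat.eqb_spec i k), (Nat.eqb_spec k i); subst; try lia; lra.
Qed.

Lemma sumN_nonneg n f : (forall k, (k < n)%nat -> 0 <= f k) -> 0 <= sumN n f.
Proof.
  induction n; simpl; intros H; [lra|].
  pose proof (H n ltac:(lia)). pose proof (IHn ltac:(intros; apply H; lia)). lra.
Qed.

Lemma sumN_le n f g : (forall k, (k < n)%nat -> f k <= g k) -> sumN n f <= sumN n g.
Proof.
  induction n; simpl; intros H; [lra|].
  pose proof (H n ltac:(lia)). pose proof (IHn ltac:(intros; apply H; lia)). lra.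
Qed.

Lemma sumN_ge_term n f k : (forall k, (k < n)%nat -> 0 <= f k) -> (k < n)%nat ->
  f k <= sumN n f.
Proof.
  induction n; simpl; intros H Hk; [lia|].
  pose proof (H n ltac:(lia)).
  destruct (Nat.eq_dec k n) as [->|Hne].
  - pose proof (sumN_nonneg n f ltac:(intros; apply H; lia)). lra.
  - pose proof (IHn ltac:(intros; apply H; lia) ltac:(lia)). lra.
Qed.

Lemma sumN_abs n f : Rabs (sumN n f) <= sumN n (fun k => Rabs (f k)).
Proof.
  induction n; simpl.
  - rewrite Rabs_R0; lra.
  - eapply Rle_trans; [apply Rabs_triang|lra].
Qed.

Lemma Un_cv_sumN n (u : nat -> nat -> R) (l : nat -> R) :
  (forall k, (k < n)%nat -> Un_cv (fun m => u m k) (l k)) ->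
  Un_cv (fun m => sumN n (fun k => u m k)) (sumN n l).
Proof.
  induction n; intros H; simpl.
  - intros eps Heps. exists 0%nat. intros. unfold R_dist. rewrite Rminus_diag, Rabs_R0; auto.
  - apply CV_plus; [apply IHn; intros; apply H; lia|apply H; lia].
Qed.

Section MatrixPowers.
Variable N : nat.
Variable A : nat -> nat -> R.
Hypothesis HA : stochastic N A.

Lemma mpow_nonneg k i j : (i < N)%nat -> (j < N)%nat -> 0 <= mpow N A k i j.
Proof.
  revert i j; induction k; intros i j Hi Hj; simpl.
  - destruct (Nat.eqb i j); lra.
  - apply sumN_nonneg. intros l Hl. apply Rmult_le_pos; [apply IHk|apply HA]; auto.
Qed.

Lemma mpow_rowsum k i : (i < N)%nat -> sumN N (fun j => mpow N A k i j) = 1.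
Proof.
  revert i; induction k; intros i Hi; simpl.
  - rewrite (sumN_ext _ _ (fun j => (if Nat.eqb i j then 1 else 0) * 1)) by (intros; lra).
    apply (sumN_kronecker_l N i (fun _ => 1)); auto.
  - rewrite sumN_swap, (sumN_ext _ _ (fun l => mpow N A k i l * 1)).
    + rewrite sumN_scal_r, IHk; auto; lra.
    + intros l Hl. rewrite sumN_scal_l, (proj2 HA); auto.
Qed.

Lemma mpow_stochastic k : stochastic N (mpow N A k).
Proof. split; intros; [apply mpow_nonneg|apply mpow_rowsum]; auto. Qed.

Lemma mpow_add a b i j : (i < N)%nat -> (j < N)%nat ->
  mpow N A (a + b) i j = sumN N (fun l => mpow N A a i l * mpow N A b l j).
Proof.
  revert i j; induction b; intros i j Hi Hj.
  - rewrite Nat.add_0_r. symmetry. apply (sumN_kronecker_r N j (mpow N A a i)); auto.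
  - rewrite Nat.add_succ_r. simpl.
    rewrite (sumN_ext _ _ (fun l => sumN N (fun m => mpow N A a i m * mpow N A b m l * A l j))).
    2:{ intros l Hl. rewrite IHb, <- sumN_scal_r; auto. }
    rewrite sumN_swap. apply sumN_ext. intros m Hm.
    rewrite <- sumN_scal_l. apply sumN_ext; intros; ring.
Qed.

Lemma mpow_S_l b i j : (i < N)%nat -> (j < N)%nat ->
  mpow N A (S b) i j = sumN N (fun l => A i l * mpow N A b l j).
Proof.
  intros Hi Hj. change (S b) with (1 + b)%nat. rewrite mpow_add; auto.
  apply sumN_ext. intros l Hl. f_equal.
  apply (sumN_kronecker_l N i (fun m => A m l)); auto.
Qed.

Lemma mpow_ge_mul a b i l j : (i < N)%nat -> (l < N)%nat -> (j < N)%nat ->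
  mpow N A a i l * mpow N A b l j <= mpow N A (a + b) i j.
Proof.
  intros Hi Hl Hj. rewrite mpow_add; auto.
  apply (sumN_ge_term N (fun m => mpow N A a i m * mpow N A b m j)); auto.
  intros; apply Rmult_le_pos; apply mpow_nonneg; auto.
Qed.

Lemma stationary_mpow mu k j : stationary_distribution N A mu -> (j < N)%nat ->
  sumN N (fun i => mu i * mpow N A k i j) = mu j.
Proof.
  intros Hmu. revert j. induction k; intros j Hj; simpl.
  - apply (sumN_kronecker_r N j mu); auto.
  - rewrite (sumN_ext _ _ (fun i => sumN N (fun l => mu i * mpow N A k i l * A l j))).
    2:{ intros; rewrite <- sumN_scal_l; apply sumN_ext; intros; ring. }
    rewrite sumN_swap, <- (proj2 (proj2 Hmu) j Hj). apply sumN_ext.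
    intros l Hl. rewrite sumN_scal_r, IHk; auto.
Qed.

End MatrixPowers.

(** * Doeblin contraction and convergence to the stationary distribution *)

Definition osc_le (N : nat) (v : nat -> R) (d : R) : Prop :=
  forall i i', (i < N)%nat -> (i' < N)%nat -> v i - v i' <= d.

Lemma argmin_lt N (v : nat -> R) : (0 < N)%nat ->
  exists l0, (l0 < N)%nat /\ forall l, (l < N)%nat -> v l0 <= v l.
Proof.
  induction N as [|N IH]; intros H; [lia|]. destruct (Nat.eq_dec N 0) as [->|HN].
  - exists 0%nat. split; [lia|]. intros l Hl. replace l with 0%nat by lia. lra.
  - destruct IH as [l0 [Hl0 Hmin]]; [lia|].
    destruct (Rle_dec (v l0) (v N)).
    + exists l0. split; [lia|]. intros l Hl.
      destruct (Nat.eq_dec l N) as [->|]; [auto|apply Hmin; lia].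
    + exists N. split; [lia|]. intros l Hl.
      destruct (Nat.eq_dec l N) as [->|]; [lra|]. pose proof (Hmin l ltac:(lia)). lra.
Qed.

Lemma doeblin_contraction N P (v : nat -> R) delta d :
  stochastic N P -> 0 <= delta ->
  (forall i j, (i < N)%nat -> (j < N)%nat -> delta <= P i j) ->
  0 <= d -> osc_le N v d ->
  osc_le N (fun i => sumN N (fun l => P i l * v l)) ((1 - INR N * delta) * d).
Proof.
  intros [HP0 HP1] Hdel0 Hdel Hd Hv i i' Hi Hi'.
  destruct (argmin_lt N v ltac:(lia)) as [l0 [Hl0 Hmin]].
  set (w := fun l => v l - v l0).
  (* Subtracting the minimum [v l0] makes [v] nonnegative without changing the oscillation. *)
  assert (Hshift : forall a, (a < N)%nat ->
    sumN N (fun l => P a l * v l) = v l0 + sumN N (fun l => P a l * w l)).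
  { intros a Ha. unfold w.
    rewrite (sumN_ext N (fun l => P a l * (v l - v l0)) (fun l => P a l * v l + - v l0 * P a l))
      by (intros; lra).
    rewrite sumN_plus, sumN_scal_l, HP1; auto; lra. }
  rewrite (Hshift i Hi), (Hshift i' Hi').
  assert (Hw : forall l, (l < N)%nat -> 0 <= w l <= d).
  { intros l Hl. unfold w. split; [pose proof (Hmin l Hl); lra|apply Hv; auto]. }
  assert (Hupper : sumN N (fun l => P i l * w l) - delta * sumN N w <= (1 - INR N * delta) * d).
  { rewrite <- sumN_scal_l.
    replace (sumN N (fun l => P i l * w l) - sumN N (fun l => delta * w l))
      with (sumN N (fun l => (P i l - delta) * w l)).
    2:{ rewrite (sumN_ext N _ (fun l => P i l * w l + -1 * (delta * w l))) by (intros; lra).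
        rewrite sumN_plus, sumN_scal_l; lra. }
    apply Rle_trans with (sumN N (fun l => (P i l - delta) * d)).
    - apply sumN_le. intros l Hl. pose proof (Hw l Hl). pose proof (Hdel i l Hi Hl). nra.
    - rewrite sumN_scal_r, (sumN_ext N _ (fun l => P i l + -1 * delta)) by (intros; lra).
      rewrite sumN_plus, sumN_const, HP1; auto; lra. }
  assert (Hlower : delta * sumN N w <= sumN N (fun l => P i' l * w l)).
  { rewrite <- sumN_scal_l. apply sumN_le. intros l Hl.
    pose proof (Hw l Hl). pose proof (Hdel i' l Hi' Hl). nra. }
  lra.
Qed.

Section Convergence.
Variable N : nat.
Variable A : nat -> nat -> R.
Variable mu : nat -> R.
Hypothesis HA : stochastic N A.
Hypothesis Hmu : stationary_distribution N A mu.
Hypothesis HN : (0 < N)%nat.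

Lemma osc_le_mpow_add a m j d delta : (j < N)%nat -> 0 <= d -> 0 <= delta ->
  (forall i l, (i < N)%nat -> (l < N)%nat -> delta <= mpow N A a i l) ->
  osc_le N (fun i => mpow N A m i j) d ->
  osc_le N (fun i => mpow N A (a + m) i j) ((1 - INR N * delta) * d).
Proof.
  intros Hj Hd Hdel Hge Hosc i i' Hi Hi'.
  rewrite !mpow_add; auto.
  apply (doeblin_contraction N (mpow N A a) (fun l => mpow N A m l j)); auto.
  apply mpow_stochastic; auto.
Qed.

Lemma osc_le_mpow_mono m j d : (j < N)%nat -> 0 <= d ->
  osc_le N (fun i => mpow N A m i j) d -> forall n, osc_le N (fun i => mpow N A (n + m) i j) d.
Proof.
  intros Hj Hd Hosc n. induction n; [exact Hosc|].
  change (S n + m)%nat with (1 + (n + m))%nat.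
  replace d with ((1 - INR N * 0) * d) by ring.
  apply osc_le_mpow_add; auto; [lra|]. intros; apply mpow_nonneg; auto.
Qed.

(** [mu] is a convex combination of the rows, so each entry of a column lies
    within the column's oscillation of the corresponding entry of [mu]. *)
Lemma mpow_stationary_dist m i j d : (i < N)%nat -> (j < N)%nat ->
  osc_le N (fun i => mpow N A m i j) d -> Rabs (mpow N A m i j - mu j) <= d.
Proof.
  intros Hi Hj Hosc. destruct Hmu as [Hmu0 [Hmu1 _]].
  rewrite <- (stationary_mpow N A mu m j Hmu Hj).
  replace (mpow N A m i j - sumN N (fun k => mu k * mpow N A m k j))
    with (sumN N (fun k => mu k * (mpow N A m i j - mpow N A m k j))).
  2:{ rewrite (sumN_ext N _ (fun k => mpow N A m i j * mu k + -1 * (mu k * mpow N A m k j)))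
        by (intros; lra).
      rewrite sumN_plus, !sumN_scal_l, Hmu1; lra. }
  eapply Rle_trans; [apply sumN_abs|].
  apply Rle_trans with (sumN N (fun k => mu k * d)).
  - apply sumN_le. intros k Hk. rewrite Rabs_mult, (Rabs_right (mu k)) by (apply Rle_ge; auto).
    apply Rmult_le_compat_l; auto. apply Rabs_le.
    pose proof (Hosc i k Hi Hk). pose proof (Hosc k i Hk Hi). lra.
  - rewrite sumN_scal_r, Hmu1; lra.
Qed.

Lemma mpow_cv_stationary K delta : 0 < delta ->
  (forall i l, (i < N)%nat -> (l < N)%nat -> delta <= mpow N A K i l) ->
  forall i j, (i < N)%nat -> (j < N)%nat -> Un_cv (fun m => mpow N A m i j) (mu j).
Proof.
  intros Hdel Hge i j Hi Hj.
  set (rho := 1 - INR N * delta).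
  assert (Hrho0 : 0 <= rho).
  { pose proof (sumN_le N (fun _ => delta) (fun l => mpow N A K 0 l)
      (fun l Hl => Hge 0%nat l HN Hl)) as Hsum.
    rewrite sumN_const, (mpow_rowsum N A HA K 0 HN) in Hsum. unfold rho; lra. }
  assert (Hrho1 : rho < 1).
  { unfold rho. assert (0 < INR N) by (apply lt_0_INR; auto). nra. }
  assert (Hgeo : forall q, osc_le N (fun i => mpow N A (q * K) i j) (rho ^ q)).
  { induction q.
    - intros a b Ha Hb. simpl. destruct (Nat.eqb a j), (Nat.eqb b j); lra.
    - apply osc_le_mpow_add; auto; [apply pow_le|]; lra. }
  intros eps Heps.
  destruct (pow_lt_1_zero rho ltac:(rewrite Rabs_right; lra) eps Heps) as [q Hq].
  exists (q * K)%nat. intros m Hm. unfold R_dist.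
  eapply Rle_lt_trans; [apply mpow_stationary_dist; eauto|].
  - replace m with ((m - q * K) + q * K)%nat by lia.
    apply osc_le_mpow_mono; auto. apply pow_le; lra.
  - specialize (Hq q (le_n q)). rewrite Rabs_right in Hq; auto. apply Rle_ge, pow_le; lra.
Qed.

End Convergence.

(** * Irreducible aperiodic matrices are primitive *)

Lemma additive_gcd1_eventually (S : nat -> Prop) :
  (forall a b, S a -> S b -> S (a + b)%nat) -> (forall n, S n -> (1 <= n)%nat) ->
  (forall d, (forall k, S k -> Nat.divide d k) -> d = 1%nat) ->
  exists M, forall n, (M <= n)%nat -> S n.
Proof.
  intros Hadd Hpos Hgcd.
  set (S0 := fun n => n = 0%nat \/ S n).
  assert (S0_add : forall a b, S0 a -> S0 b -> S0 (a + b)%nat).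
  { intros a b [->|Ha] [->|Hb]; unfold S0; auto. rewrite Nat.add_0_r; auto. }
  assert (S0_mul : forall q s, S0 s -> S0 (q * s)%nat).
  { induction q; intros s Hs; simpl; [left; auto|]. apply S0_add; auto. }
  assert (S0_S : forall n, S0 n -> n <> 0%nat -> S n) by (intros n [H|H] H'; [lia|auto]).
  destruct (classic (exists k, S k)) as [[s0 Hs0]|Hempty].
  2:{ assert (0%nat = 1%nat) by (apply Hgcd; intros k Hk; exfalso; eauto). lia. }
  (* The least positive difference [g] of two elements of [S0] divides every element of [S]. *)
  set (P := fun g => (0 < g)%nat /\ exists a b, S0 a /\ S0 b /\ a = (b + g)%nat).
  destruct (Wf_nat.dec_inh_nat_subset_has_unique_least_element P (fun n => classic (P n)))
    as [g [[[Hg [a [b [Ha [Hb Hab]]]]] Hmin] _]].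
  { exists s0. split; [apply Hpos; auto|]. exists s0, 0%nat. unfold S0; auto. }
  assert (Hdiv : forall s, S s -> Nat.divide g s).
  { intros s Hs. pose proof (Nat.div_mod s g ltac:(lia)) as Hdm.
    pose proof (Nat.mod_upper_bound s g ltac:(lia)) as Hr.
    set (q := (s / g)%nat) in *. set (r := (s mod g)%nat) in *.
    destruct (Nat.eq_dec r 0) as [Hr0|Hr0]; [exists q; lia|].
    assert (P r).
    { split; [lia|]. exists (s + q * b)%nat, (q * a)%nat.
      split; [apply S0_add; [right; auto|apply S0_mul; auto]|].
      split; [apply S0_mul; auto|]. subst a. nia. }
    specialize (Hmin r H). lia. }
  assert (g = 1%nat) by (apply Hgcd; auto). subst g.
  destruct (Nat.eq_dec b 0) as [->|Hb0].
  - exists 1%nat. intros n Hn. apply S0_S; [|lia].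
    replace n with (n * a)%nat by lia. apply S0_mul; auto.
  - exists (b * b + 1)%nat. intros n Hn. apply S0_S; [|lia].
    pose proof (Nat.div_mod n b Hb0) as Hdm. pose proof (Nat.mod_upper_bound n b Hb0) as Hr.
    set (q := (n / b)%nat) in *. set (r := (n mod b)%nat) in *.
    assert (Hq : (b <= q)%nat) by nia.
    replace n with ((q - r) * b + r * a)%nat by nia.
    apply S0_add; apply S0_mul; auto.
Qed.

Lemma eventually_forall_lt N (P : nat -> nat -> Prop) :
  (forall i, (i < N)%nat -> exists M, forall n, (M <= n)%nat -> P i n) ->
  exists M, forall i, (i < N)%nat -> forall n, (M <= n)%nat -> P i n.
Proof.
  induction N as [|N IH]; intros H.
  - exists 0%nat; intros; lia.
  - destruct IH as [M1 H1]; [intros; apply H; lia|].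
    destruct (H N ltac:(lia)) as [M2 H2].
    exists (M1 + M2)%nat. intros i Hi n Hn.
    destruct (Nat.eq_dec i N) as [->|]; [apply H2|apply H1]; lia.
Qed.

Lemma pos_lower_bound_lt N (f : nat -> R) : (forall i, (i < N)%nat -> 0 < f i) ->
  exists d, 0 < d /\ forall i, (i < N)%nat -> d <= f i.
Proof.
  induction N as [|N IH]; intros H.
  - exists 1. split; [lra|intros; lia].
  - destruct IH as [d [Hd Hle]]; [intros; apply H; lia|].
    exists (Rmin d (f N)). split; [apply Rmin_glb_lt; auto; apply H; lia|].
    intros i Hi. destruct (Nat.eq_dec i N) as [->|]; [apply Rmin_r|].
    eapply Rle_trans; [apply Rmin_l|apply Hle; lia].
Qed.

Section Primitivity.
Variable N : nat.
Variable A : nat -> nat -> R.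
Hypothesis HA : stochastic N A.
Hypothesis Hirr : irreducible N A.
Hypothesis Hap : aperiodic N A.

Lemma mpow_diag_eventually_pos i : (i < N)%nat ->
  exists M, forall n, (M <= n)%nat -> 0 < mpow N A n i i.
Proof.
  intros Hi.
  destruct (additive_gcd1_eventually (fun k => (1 <= k)%nat /\ 0 < mpow N A k i i)) as [M HM].
  4:{ exists M. intros n Hn. apply HM; auto. }
  - intros a b [Ha1 Ha2] [Hb1 Hb2]. split; [lia|].
    eapply Rlt_le_trans; [|apply (mpow_ge_mul N A HA a b i i i); auto].
    apply Rmult_lt_0_compat; auto.
  - intros n [H _]; auto.
  - intros d Hd. apply (Hap i Hi d). intros k Hk Hpos. apply Hd; auto.
Qed.

Lemma mpow_eventually_pos i : (i < N)%nat ->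
  exists M, forall n, (M <= n)%nat -> forall j, (j < N)%nat -> 0 < mpow N A n i j.
Proof.
  intros Hi.
  destruct (eventually_forall_lt N (fun j n => 0 < mpow N A n i j)) as [M HM].
  - intros j Hj. destruct (Hirr i j Hi Hj) as [k Hk].
    pose proof (mpow_nonneg N A HA k i j Hi Hj).
    destruct (mpow_diag_eventually_pos i Hi) as [M0 HM0].
    exists (M0 + k)%nat. intros n Hn.
    replace n with ((n - k) + k)%nat by lia.
    eapply Rlt_le_trans; [|apply (mpow_ge_mul N A HA (n - k) k i i j); auto].
    apply Rmult_lt_0_compat; [apply HM0; lia|lra].
  - exists M. intros n Hn j Hj. apply HM; auto.
Qed.

Lemma primitive_power : exists K delta, 0 < delta /\
  forall i l, (i < N)%nat -> (l < N)%nat -> delta <= mpow N A K i l.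
Proof.
  destruct (eventually_forall_lt N _ mpow_eventually_pos) as [K HK].
  destruct (pos_lower_bound_lt (N * N) (fun p => mpow N A K (p / N) (p mod N)))
    as [d [Hd Hle]].
  { intros p Hp. apply HK; auto.
    - apply Nat.Div0.div_lt_upper_bound; nia.
    - apply Nat.mod_upper_bound; nia. }
  exists K, d. split; auto. intros i l Hi Hl.
  specialize (Hle (i * N + l)%nat ltac:(nia)).
  rewrite Nat.div_add_l, Nat.div_small, Nat.add_0_r, Nat.add_comm, Nat.Div0.mod_add,
    Nat.mod_small in Hle by lia.
  exact Hle.
Qed.

End Primitivity.

(** * The estimator as a weighted sum of centred observations *)

Lemma thetahat_aux_centered {Omega : Type} N A (X : nat -> nat -> Omega -> R) th :
  stochastic N A -> forall n i w, (i < N)%nat ->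
  thetahat_aux N A X n i w - th =
  / INR (S n) * sumN (S n) (fun k => sumN N (fun j => mpow N A (n - k) i j * (X (S k) j w - th))).
Proof.
  intros HA n. induction n as [|n IH]; intros i w Hi.
  - simpl thetahat_aux. rewrite sumN_S, Nat.sub_0_r. simpl sumN at 1. simpl mpow.
    rewrite (sumN_kronecker_l N i (fun j => X 1%nat j w - th)); auto. simpl INR. field.
  - set (T := sumN (S n) (fun k => sumN N (fun l => mpow N A (S n - k) i l * (X (S k) l w - th)))).
    assert (Hrec : sumN N (fun j => A i j * thetahat_aux N A X n j w) = th + / INR (S n) * T).
    { rewrite (sumN_ext N _ (fun j => th * A i j + / INR (S n) * sumN (S n) (fun k =>
        sumN N (fun l => A i j * mpow N A (n - k) j l * (X (S k) l w - th))))).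
      2:{ intros j Hj.
          replace (thetahat_aux N A X n j w) with (th + (thetahat_aux N A X n j w - th)) by ring.
          rewrite IH, Rmult_plus_distr_l by auto.
          rewrite (sumN_ext (S n)
            (fun k => sumN N (fun l => A i j * mpow N A (n - k) j l * (X (S k) l w - th)))
            (fun k => A i j * sumN N (fun l => mpow N A (n - k) j l * (X (S k) l w - th)))).
          2:{ intros; rewrite <- sumN_scal_l; apply sumN_ext; intros; ring. }
          rewrite sumN_scal_l. ring. }
      rewrite sumN_plus, !sumN_scal_l, (proj2 HA) by auto.
      f_equal; [ring|]. f_equal. unfold T.
      rewrite sumN_swap. apply sumN_ext. intros k Hk.
      rewrite sumN_swap. apply sumN_ext. intros l Hl.
      rewrite sumN_scal_r. replace (S n - k)%nat with (S (n - k)) by lia.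
      rewrite mpow_S_l; auto. }
    assert (Hlast : sumN N (fun l => mpow N A (S n - S n) i l * (X (S (S n)) l w - th))
                    = X (S (S n)) i w - th).
    { rewrite Nat.sub_diag. apply (sumN_kronecker_l N i (fun l => X (S (S n)) l w - th)); auto. }
    cbn [thetahat_aux]. rewrite sumN_S. fold T. rewrite Hlast, Hrec.
    assert (0 < INR (S n)) by (apply lt_0_INR; lia).
    rewrite (S_INR (S n)). field. lra.
Qed.

(** * Second moments of uncorrelated sums *)

Section Expectation.
Variable Omega : Type.
Variable integrable : (Omega -> R) -> Prop.
Variable E : (Omega -> R) -> R.
Hypothesis HE : expectation_axioms integrable E.

Lemma E_ext f g : (forall w, f w = g w) -> E f = E g.
Proof. intros H. f_equal. apply functional_extensionality; auto. Qed.

Lemma integrable_ext f g : (forall w, f w = g w) -> integrable f -> integrable g.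
Proof. intros H. replace g with f; auto. apply functional_extensionality; auto. Qed.

Lemma integrable_const c : integrable (fun _ => c).
Proof. apply (proj1 HE). Qed.

Lemma E_const c : E (fun _ => c) = c.
Proof. apply (proj1 HE). Qed.

Lemma integrable_plus f g : integrable f -> integrable g -> integrable (fun w => f w + g w).
Proof. intros; apply (proj1 (proj2 HE)); auto. Qed.

Lemma E_plus f g : integrable f -> integrable g -> E (fun w => f w + g w) = E f + E g.
Proof. intros; apply (proj1 (proj2 HE)); auto. Qed.

Lemma integrable_scal c f : integrable f -> integrable (fun w => c * f w).
Proof. intros; apply (proj1 (proj2 (proj2 HE))); auto. Qed.

Lemma E_scal c f : integrable f -> E (fun w => c * f w) = c * E f.
Proof. intros; apply (proj1 (proj2 (proj2 HE))); auto. Qed.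

Lemma integrable_E_sumN n (f : nat -> Omega -> R) :
  (forall k, (k < n)%nat -> integrable (f k)) ->
  integrable (fun w => sumN n (fun k => f k w)) /\
  E (fun w => sumN n (fun k => f k w)) = sumN n (fun k => E (f k)).
Proof.
  induction n; intros H; simpl.
  - split; [apply integrable_const|apply E_const].
  - destruct IHn as [Hint HEsum]; [intros; apply H; lia|].
    split; [apply integrable_plus; auto; apply H; lia|]. rewrite E_plus, HEsum; auto.
Qed.

Lemma E_sumN_uncorrelated_sq (Z : nat -> Omega -> R) M s (c : nat -> R) :
  (forall p q, (p < M)%nat -> (q < M)%nat -> integrable (fun w => Z p w * Z q w)) ->
  (forall p q, (p < M)%nat -> (q < M)%nat -> p <> q -> E (fun w => Z p w * Z q w) = 0) ->
  (forall p, (p < M)%nat -> E (fun w => Z p w * Z p w) = s) ->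
  integrable (fun w => (sumN M (fun p => c p * Z p w)) ^ 2) /\
  E (fun w => (sumN M (fun p => c p * Z p w)) ^ 2) = s * sumN M (fun p => c p ^ 2).
Proof.
  intros Hint Horth Hvar. induction M as [|M IH].
  - simpl sumN. split.
    + apply (integrable_ext (fun _ => 0)); [intros; simpl; ring|apply integrable_const].
    + rewrite (E_ext _ (fun _ => 0)) by (intros; simpl; ring). rewrite E_const; ring.
  - cbn [sumN].
    destruct IH as [Hint_S HE_S]; try (intros; apply Hint || apply Horth || apply Hvar; lia).
    set (C := fun w => sumN M (fun p => c p * (Z M w * Z p w))).
    assert (Hint_C : integrable C /\ E C = 0).
    { destruct (integrable_E_sumN M (fun p w => c p * (Z M w * Z p w))) as [HintC HEC].
      { intros; apply integrable_scal, Hint; lia. }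
      split; auto. unfold C. rewrite HEC, (sumN_ext _ _ (fun _ => 0 * 0)), sumN_const; [ring|].
      intros k Hk. rewrite E_scal, Horth by (try apply Hint; lia); ring. }
    assert (Hsq : forall w, (sumN M (fun p => c p * Z p w) + c M * Z M w) ^ 2 =
      ((sumN M (fun p => c p * Z p w)) ^ 2 + 2 * c M * C w) + c M ^ 2 * (Z M w * Z M w)).
    { intros w. unfold C.
      rewrite (sumN_ext M (fun p => c p * (Z M w * Z p w)) (fun p => Z M w * (c p * Z p w)))
        by (intros; ring).
      rewrite sumN_scal_l.
      ring. }
    assert (Hint1 : integrable (fun w => (sumN M (fun p => c p * Z p w)) ^ 2 + 2 * c M * C w)).
    { apply integrable_plus, integrable_scal; tauto. }
    assert (Hint2 : integrable (fun w => c M ^ 2 * (Z M w * Z M w))).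
    { apply integrable_scal, Hint; lia. }
    split.
    + eapply integrable_ext; [intros w; symmetry; apply Hsq|]. apply integrable_plus; auto.
    + rewrite (E_ext _ _ Hsq), E_plus, E_plus, E_scal, E_scal, HE_S, (proj2 Hint_C), Hvar
        by (tauto || lia || (apply integrable_scal; tauto) || (apply Hint; lia)).
      ring.
Qed.

End Expectation.

Arguments E_ext {Omega} E f g.
Arguments integrable_ext {Omega} integrable f g.
Arguments integrable_const {Omega integrable E} HE c.
Arguments E_const {Omega integrable E} HE c.
Arguments integrable_plus {Omega integrable E} HE f g.
Arguments E_plus {Omega integrable E} HE f g.
Arguments integrable_scal {Omega integrable E} HE c f.
Arguments E_scal {Omega integrable E} HE c f.
Arguments integrable_E_sumN {Omega integrable E} HE n f.

Definition frob2 (N : nat) (M : nat -> nat -> R) : R :=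
  sumN N (fun i => sumN N (fun j => M i j ^ 2)).

Lemma cont_sub_const (c : R) : continuity (fun x => x - c).
Proof. apply derivable_continuous; reg. Qed.

Lemma cont_sub_const_sq (c : R) : continuity (fun x => (x - c) ^ 2).
Proof. apply derivable_continuous; reg. Qed.

Section MeanSquaredErrors.
Variable Omega : Type.
Variable integrable : (Omega -> R) -> Prop.
Variable E : (Omega -> R) -> R.
Hypothesis HE : expectation_axioms integrable E.
Variable X0 : Omega -> R.
Variable X : nat -> nat -> Omega -> R.
Variable N : nat.
Hypothesis HX0 : integrable X0.
Hypothesis HX0sq : integrable (fun w => X0 w ^ 2).
Hypothesis Hid : identically_distributed N integrable E X0 X.
Hypothesis Hind : mutually_independent N integrable E X.
Hypothesis HN : (0 < N)%nat.

Let variance := E (fun w => (X0 w - E X0) ^ 2).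

Lemma centered_X0 : integrable (fun w => X0 w - E X0) /\ E (fun w => X0 w - E X0) = 0.
Proof.
  assert (Hsum : forall w, X0 w - E X0 = X0 w + (fun _ => - E X0) w) by (intros; simpl; ring).
  split.
  - eapply integrable_ext; [intros; symmetry; apply Hsum|].
    apply (integrable_plus HE); [|apply (integrable_const HE)]; auto.
  - rewrite (E_ext E _ _ Hsum), (E_plus HE), (E_const HE); auto; [ring|apply (integrable_const HE)].
Qed.

Lemma integrable_centered_X0_sq : integrable (fun w => (X0 w - E X0) ^ 2).
Proof.
  apply (integrable_ext integrable
    (fun w => (X0 w ^ 2 + (-2 * E X0) * X0 w) + (fun _ => E X0 ^ 2) w)); [intros; simpl; ring|].
  apply (integrable_plus HE); [|apply (integrable_const HE)].
  apply (integrable_plus HE), (integrable_scal HE); auto.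
Qed.

Lemma centered_obs_moments t j : (1 <= t)%nat -> (j < N)%nat ->
  integrable (fun w => X t j w - E X0) /\ E (fun w => X t j w - E X0) = 0 /\
  integrable (fun w => (X t j w - E X0) * (X t j w - E X0)) /\
  E (fun w => (X t j w - E X0) * (X t j w - E X0)) = variance.
Proof.
  intros Ht Hj.
  destruct (Hid t j _ Ht Hj (cont_sub_const (E X0))) as [[_ Hint1] HE1].
  destruct (Hid t j _ Ht Hj (cont_sub_const_sq (E X0))) as [[_ Hint2] HE2].
  assert (Hsq : forall w, (X t j w - E X0) ^ 2 = (X t j w - E X0) * (X t j w - E X0))
    by (intros; ring).
  repeat split.
  - apply Hint1, centered_X0.
  - rewrite HE1; apply centered_X0.
  - eapply integrable_ext; [apply Hsq|]. apply Hint2, integrable_centered_X0_sq.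
  - rewrite <- (E_ext E _ _ Hsq), HE2; reflexivity.
Qed.

Lemma centered_obs_uncorrelated t j t' j' :
  (1 <= t)%nat -> (j < N)%nat -> (1 <= t')%nat -> (j' < N)%nat -> (t, j) <> (t', j') ->
  integrable (fun w => (X t j w - E X0) * (X t' j' w - E X0)) /\
  E (fun w => (X t j w - E X0) * (X t' j' w - E X0)) = 0.
Proof.
  intros Ht Hj Ht' Hj' Hne.
  destruct (Hind ((t, j) :: (t', j') :: nil) (fun _ x => x - E X0)) as [Hint HEprod].
  - constructor; [simpl; intros [H|[]]; auto|constructor; [simpl; auto|constructor]].
  - repeat constructor; simpl; auto.
  - intros; apply cont_sub_const.
  - intros p [<-|[<-|[]]]; simpl; apply centered_obs_moments; auto.
  - simpl in Hint, HEprod.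
    assert (Hprod : forall w, (X t j w - E X0) * ((X t' j' w - E X0) * 1)
                              = (X t j w - E X0) * (X t' j' w - E X0)) by (intros; ring).
    split; [eapply integrable_ext; [apply Hprod|exact Hint]|].
    rewrite <- (E_ext E _ _ Hprod), HEprod, (proj1 (proj2 (centered_obs_moments t j Ht Hj))).
    ring.
Qed.

(** The observations [X_t^(i)], [t >= 1], enumerated as [p = (t - 1) * N + i]. *)
Definition noise (p : nat) (w : Omega) : R := X (S (p / N)) (p mod N) w - E X0.

Lemma E_sq_weighted_noise M (c : nat -> R) :
  integrable (fun w => (sumN M (fun p => c p * noise p w)) ^ 2) /\
  E (fun w => (sumN M (fun p => c p * noise p w)) ^ 2) = variance * sumN M (fun p => c p ^ 2).
Proof.
  assert (Hmod : forall p, (p mod N < N)%nat) by (intros; apply Nat.mod_upper_bound; lia).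
  assert (Hinj : forall p q, p <> q -> (S (p / N), p mod N) <> (S (q / N), q mod N)).
  { intros p q Hpq Heq. injection Heq; intros.
    apply Hpq. rewrite (Nat.div_mod p N), (Nat.div_mod q N) by lia. lia. }
  apply E_sumN_uncorrelated_sq; auto; unfold noise.
  - intros p q _ _. destruct (Nat.eq_dec p q) as [<-|Hpq].
    + apply centered_obs_moments; auto; lia.
    + apply centered_obs_uncorrelated; auto; lia.
  - intros p q _ _ Hpq. apply centered_obs_uncorrelated; auto; lia.
  - intros p _. apply centered_obs_moments; auto; lia.
Qed.

Lemma Xbar_noise_expansion n w :
  Xbar N X (S n) w - E X0 = sumN (S n * N) (fun p => / (INR N * INR (S n)) * noise p w).
Proof.
  assert (INR (S n) <> 0) by (apply not_0_INR; lia).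
  assert (INR N <> 0) by (apply not_0_INR; lia).
  unfold Xbar, noise.
  rewrite <- (sumN_flatten (S n) N (fun k j => / (INR N * INR (S n)) * (X (S k) j w - E X0)))
    by auto.
  rewrite sumN_swap.
  rewrite (sumN_ext (S n)
    (fun k => sumN N (fun j => / (INR N * INR (S n)) * (X (S k) j w - E X0)))
    (fun k => / (INR N * INR (S n)) * sumN N (fun j => X (S k) j w)
              + - / (INR N * INR (S n)) * E X0 * INR N)).
  2:{ intros k Hk.
      rewrite (sumN_ext N (fun j => / (INR N * INR (S n)) * (X (S k) j w - E X0))
        (fun j => / (INR N * INR (S n)) * X (S k) j w + - / (INR N * INR (S n)) * E X0))
        by (intros; ring).
      rewrite sumN_plus, sumN_scal_l, sumN_const. ring. }
  rewrite sumN_plus, sumN_scal_l, sumN_const. field. auto.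
Qed.

Lemma E_sq_err_Xbar n :
  E (fun w => sumN N (fun _ => (Xbar N X (S n) w - E X0) ^ 2)) = variance / INR (S n).
Proof.
  assert (INR (S n) <> 0) by (apply not_0_INR; lia).
  assert (INR N <> 0) by (apply not_0_INR; lia).
  destruct (E_sq_weighted_noise (S n * N) (fun p => / (INR N * INR (S n)))) as [Hint HEsq].
  assert (Hexp : forall w, (sumN (S n * N) (fun p => / (INR N * INR (S n)) * noise p w)) ^ 2
                           = (Xbar N X (S n) w - E X0) ^ 2)
    by (intros; rewrite Xbar_noise_expansion; reflexivity).
  rewrite (E_ext E _ _ Hexp) in HEsq.
  destruct (integrable_E_sumN HE N (fun _ w => (Xbar N X (S n) w - E X0) ^ 2)) as [_ HEsum].
  { intros. exact (integrable_ext integrable _ _ Hexp Hint). }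
  rewrite HEsum, sumN_const, HEsq, sumN_const, mult_INR. field. auto.
Qed.

Section Estimator.
Variable A : nat -> nat -> R.
Hypothesis HA : stochastic N A.

Lemma thetahat_noise_expansion n i w : (i < N)%nat ->
  thetahat N A X (S n) i w - E X0 =
  sumN (S n * N) (fun p => / INR (S n) * mpow N A (n - p / N) i (p mod N) * noise p w).
Proof.
  intros Hi. unfold thetahat. replace (S n - 1)%nat with n by lia.
  rewrite thetahat_aux_centered by auto.
  rewrite (sumN_flatten (S n) N (fun k j => mpow N A (n - k) i j * (X (S k) j w - E X0)))
    by auto.
  rewrite <- sumN_scal_l. apply sumN_ext. intros; unfold noise; ring.
Qed.

Lemma E_sq_err_thetahat n :
  E (fun w => sumN N (fun i => (thetahat N A X (S n) i w - E X0) ^ 2)) =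
  variance / INR (S n) ^ 2 * sumN (S n) (fun m => frob2 N (mpow N A m)).
Proof.
  assert (INR (S n) <> 0) by (apply not_0_INR; lia).
  assert (Hrow : forall i, (i < N)%nat ->
    integrable (fun w => (thetahat N A X (S n) i w - E X0) ^ 2) /\
    E (fun w => (thetahat N A X (S n) i w - E X0) ^ 2) =
    variance / INR (S n) ^ 2 * sumN (S n) (fun k => sumN N (fun j => mpow N A (n - k) i j ^ 2))).
  { intros i Hi.
    destruct (E_sq_weighted_noise (S n * N)
      (fun p => / INR (S n) * mpow N A (n - p / N) i (p mod N))) as [Hint HEsq].
    assert (Hexp : forall w,
      (sumN (S n * N) (fun p => / INR (S n) * mpow N A (n - p / N) i (p mod N) * noise p w)) ^ 2
      = (thetahat N A X (S n) i w - E X0) ^ 2)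
      by (intros; rewrite thetahat_noise_expansion; auto).
    rewrite (E_ext E _ _ Hexp) in HEsq.
    split; [exact (integrable_ext integrable _ _ Hexp Hint)|].
    rewrite HEsq, (sumN_flatten (S n) N (fun k j => mpow N A (n - k) i j ^ 2)),
      <- sumN_scal_l by auto.
    unfold Rdiv. rewrite <- sumN_scal_l. apply sumN_ext. intros. field. auto. }
  destruct (integrable_E_sumN HE N
    (fun i w => (thetahat N A X (S n) i w - E X0) ^ 2)) as [_ HEsum].
  { intros; apply Hrow; auto. }
  rewrite HEsum, (sumN_ext N _ _ (fun i Hi => proj2 (Hrow i Hi))), sumN_scal_l, sumN_swap.
  f_equal. rewrite <- (sumN_rev (S n) (fun m => frob2 N (mpow N A m))).
  apply sumN_ext. intros k Hk. unfold frob2.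
  replace (S n - 1 - k)%nat with (n - k)%nat by lia. reflexivity.
Qed.

Lemma frob2_mpow_sum_pos n : 0 < sumN (S n) (fun m => frob2 N (mpow N A m)).
Proof.
  assert (Hnonneg : forall M, 0 <= frob2 N M).
  { intros M. apply sumN_nonneg. intros. apply sumN_nonneg. intros. apply pow2_ge_0. }
  assert (Hfrob0 : 1 <= frob2 N (mpow N A 0)).
  { unfold frob2.
    eapply Rle_trans; [|apply (sumN_ge_term N _ 0%nat); auto];
      [|intros; apply sumN_nonneg; intros; apply pow2_ge_0].
    eapply Rle_trans; [|apply (sumN_ge_term N _ 0%nat); auto]; [|intros; apply pow2_ge_0].
    simpl; lra. }
  pose proof (sumN_ge_term (S n) (fun m => frob2 N (mpow N A m)) 0%nat
    (fun m _ => Hnonneg _) ltac:(lia)).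
  simpl in *; lra.
Qed.

Lemma tau_closed_form n : 0 < variance ->
  tau N E X0 A X (S n) = INR (S n) / sumN (S n) (fun m => frob2 N (mpow N A m)).
Proof.
  intros Hvar. unfold tau. rewrite E_sq_err_Xbar, E_sq_err_thetahat.
  pose proof (frob2_mpow_sum_pos n).
  assert (INR (S n) <> 0) by (apply not_0_INR; lia).
  field. split; lra.
Qed.

End Estimator.
End MeanSquaredErrors.

Lemma frob2_mpow_cv N A mu : stochastic N A -> irreducible N A -> aperiodic N A ->
  stationary_distribution N A mu -> (0 < N)%nat ->
  Un_cv (fun m => frob2 N (mpow N A m)) (INR N * sumN N (fun j => mu j ^ 2)).
Proof.
  intros HA Hirr Hap Hmu HN.
  destruct (primitive_power N A HA Hirr Hap) as [K [delta [Hdelta Hge]]].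
  unfold frob2. rewrite <- sumN_const.
  apply Un_cv_sumN. intros i Hi. apply Un_cv_sumN. intros j Hj.
  replace (mu j ^ 2) with (mu j * mu j) by ring.
  apply Un_cv_ext with (fun m => mpow N A m i j * mpow N A m i j); [intros; ring|].
  apply CV_mult; apply (mpow_cv_stationary N A mu HA Hmu HN K delta); auto.
Qed.

Lemma stationary_sumsq_pos N A mu : stationary_distribution N A mu ->
  0 < sumN N (fun j => mu j ^ 2).
Proof.
  intros [Hmu0 [Hmu1 _]].
  destruct (Rle_lt_or_eq_dec 0 _ (sumN_nonneg N (fun j => mu j ^ 2) (fun j _ => pow2_ge_0 (mu j))))
    as [Hpos|Hzero]; auto.
  exfalso. rewrite (sumN_ext N mu (fun _ => 0 * 0)), sumN_const in Hmu1; [lra|].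
  intros k Hk.
  pose proof (sumN_ge_term N (fun j => mu j ^ 2) k (fun j _ => pow2_ge_0 (mu j)) Hk).
  nra.
Qed.

Lemma sum_f_R0_sumN f n : sum_f_R0 f n = sumN (S n) f.
Proof. induction n; simpl; [ring|]. rewrite IHn. reflexivity. Qed.

Lemma Cesaro_inv (u : nat -> R) L : Un_cv u L -> L <> 0 ->
  Un_cv (fun n => INR (S n) / sumN (S n) u) (/ L).
Proof.
  intros Hu HL.
  pose proof (CV_shift' _ 1 L (Cesaro_1 u L Hu)) as Hmean.
  apply Un_cv_ext with (fun n => / (sumN (S n) u / INR (S n))).
  { intros n. apply Rinv_div. }
  apply (continuity_seq (fun x => / x)).
  - apply (continuity_pt_inv (fun x => x)); auto. apply derivable_continuous_pt; reg.
  - eapply Un_cv_ext; [|exact Hmean]. intros n.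
    cbv beta. replace (n + 1)%nat with (S n) by lia. rewrite sum_f_R0_sumN. reflexivity.
Qed.

Theorem proposition2
  (Omega : Type) (integrable : (Omega -> R) -> Prop) (E : (Omega -> R) -> R)
  (X0 : Omega -> R) (X : nat -> nat -> Omega -> R)
  (N : nat) (A : nat -> nat -> R) (mu : nat -> R) :
  expectation_axioms integrable E ->
  integrable X0 -> integrable (fun w => X0 w ^ 2) ->
  0 < E (fun w => (X0 w - E X0) ^ 2) ->
  identically_distributed N integrable E X0 X ->
  mutually_independent N integrable E X ->
  (2 <= N)%nat ->
  stochastic N A -> irreducible N A -> aperiodic N A ->
  stationary_distribution N A mu ->
  Un_cv (fun n => tau N E X0 A X (S n))
        (/ (INR N * sumN N (fun j => mu j ^ 2))).
Proof.
  intros HE HX0 HX0sq Hvar Hid Hind HN2 HA Hirr Hap Hmu.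
  assert (HN : (0 < N)%nat) by lia.
  apply Un_cv_ext with (fun n => INR (S n) / sumN (S n) (fun m => frob2 N (mpow N A m))).
  { intros n. symmetry. apply (tau_closed_form Omega integrable E HE X0 X N); auto. }
  apply Cesaro_inv; [apply frob2_mpow_cv; auto|].
  apply Rgt_not_eq, Rmult_lt_0_compat; [apply lt_0_INR; auto|].
  apply (stationary_sumsq_pos N A); auto.
Qed.
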